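(* For any set of rule schemes $\mathcal{R}\subseteq\{N,H,P,F,wF\}$: if $\mathbf{STL}(\mathcal{R})\vdash\Gamma\Rightarrow A$ then $\mathbf{ST}(\mathcal{R})\vDash\Gamma\Rightarrow A$; and if $\Gamma\vdash_{i\mathbf{STL}(\mathcal{R})}A$ then $i\mathbf{ST}(\mathcal{R})\vDash\Gamma\Rightarrow A$.
   Context: Formulas of $\mathcal{L}_\nabla$ are built from propositional variables and constants $1,\top,\bot$ by binary $\wedge,\vee,\otimes,\to$ and unary $\nabla$. A sequent is $\Gamma\Rightarrow A$ with $\Gamma$ a finite (possibly empty) sequence of formulas; $\nabla\Gamma$ applies $\nabla$ to each member. $\mathbf{STL}$ has axioms $A\Rightarrow A$, $\Rightarrow1$, $\nabla1\Rightarrow1$, $\Gamma\Rightarrow\top$, $\Gamma,\bot,\Sigma\Rightarrow A$ and rules (premises / conclusion): cut: $\Gamma\Rightarrow A$ and $\Pi,A,\Sigma\Rightarrow B$ / $\Pi,\Gamma,\Sigma\Rightarrow B$; $L\wedge$: $\Gamma,A,\Sigma\Rightarrow C$ / $\Gamma,A\wedge B,\Sigma\Rightarrow C$ and $\Gamma,B,\Sigma\Rightarrow C$ / $\Gamma,A\wedge B,\Sigma\Rightarrow C$; $R\wedge$: $\Gamma\Rightarrow A$ and $\Gamma\Rightarrow B$ / $\Gamma\Rightarrow A\wedge B$; $L\vee$: $\Gamma,A,\Sigma\Rightarrow C$ and $\Gamma,B,\Sigma\Rightarrow C$ / $\Gamma,A\vee B,\Sigma\Rightarrow C$; $R\vee$: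 $\Gamma\Rightarrow A$ / $\Gamma\Rightarrow A\vee B$ and $\Gamma\Rightarrow B$ / $\Gamma\Rightarrow A\vee B$; $L1$: $\Gamma,\Sigma\Rightarrow A$ / $\Gamma,1,\Sigma\Rightarrow A$; $L\otimes$: $\Gamma,A,B,\Sigma\Rightarrow C$ / $\Gamma,A\otimes B,\Sigma\Rightarrow C$; $R\otimes$: $\Gamma\Rightarrow A$ and $\Sigma\Rightarrow B$ / $\Gamma,\Sigma\Rightarrow A\otimes B$; $(\nabla)$: $A\Rightarrow B$ / $\nabla A\Rightarrow\nabla B$; Oplax: $\nabla A,\nabla B\Rightarrow C$ / $\nabla(A\otimes B)\Rightarrow C$; $L\to$: $\Gamma\Rightarrow A$ and $\Pi,B,\Sigma\Rightarrow C$ / $\Pi,\Gamma,\nabla(A\to B),\Sigma\Rightarrow C$; $R\to$: $A,\nabla\Gamma\Rightarrow B$ / $\Gamma\Rightarrow A\to B$. Rule schemes: $(N)$: $\Gamma\Rightarrow A$ / $\nabla\Gamma\Rightarrow\nabla A$; $(P)$: $\Gamma\Rightarrow\nabla A$ / $\Gamma\Rightarrow A$; $(F)$: $\Gamma\Rightarrow A$ / $\Gamma\Rightarrow\nabla A$; $(wF)$: $\nabla A\Rightarrow\bot$ / $A\Rightarrow\bot$; $(H)$: $\Gamma,A_1\to B_1,\dots,A_n\to B_n\Rightarrow C$ / $\nabla\Gamma,\nabla A_1\to\nabla B_1,\dots,\nabla A_n\to\nabla B_n\Rightarrow\nabla C$ ($n\ge0$). Structural rules: weakening $\Gamma,\Sigma\Rightarrow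 B$ / $\Gamma,A,\Sigma\Rightarrow B$; contraction $\Gamma,A,A,\Sigma\Rightarrow B$ / $\Gamma,A,\Sigma\Rightarrow B$; exchange $\Gamma,A,B,\Sigma\Rightarrow C$ / $\Gamma,B,A,\Sigma\Rightarrow C$. $\mathbf{STL}(\mathcal{R})$ is $\mathbf{STL}$ plus the schemes in $\mathcal{R}$; $i\mathbf{STL}(\mathcal{R})$ is $\mathbf{STL}(\mathcal{R})$ plus the structural rules; $\Gamma\vdash_L A$ means $L$ derives $\Gamma\Rightarrow A$. Semantics: a quantale is a monoidal poset (monoid with multiplication monotone in each argument) with all joins over which multiplication distributes; a locale is a quantale whose multiplication is binary meet with unit the top. A non-commutative spacetime is $\mathcal{S}=(\mathscr{X},\nabla)$ with $\mathscr{X}$ a quantale, $\nabla$ join preserving and oplax monoidal ($\nabla e\le e$, $\nabla(a\otimes b)\le\nabla a\otimes\nabla b$); a spacetime is one where $\mathscr{X}$ is a locale. Its implication $\to_{\mathcal{S}}$ is characterized by $a\otimes\nabla b\le c$ iff $b\le a\to_{\mathcal{S}}c$. A valuation $V$ maps formulas to $\mathscr{X}$ with $V(1)=e$, $V(\bot)=$ bottom, $V(\top)=$ top, and $V$ commuting with $\wedge,\vee,\otimes,\nabla,\to$ (interpreted by meet, join, $\otimes$, $\nabla$, $\to_{\mathcal{S}}$). $(\mathcal{S},V)\vDash\gamma_1,\dots,\gamma_n\Rightarrow A$ iff $V(\gamma_1)\otimes\cdots\otimes V(\gamma_n)\le V(A)$ (empty product $=e$); $\mathcal{S}\vDash$ means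 for all $V$; a class $\vDash$ means for every member. $\mathcal{S}$ satisfies $(N)$ if $\nabla e=e$ and $\nabla(a\otimes b)=\nabla a\otimes\nabla b$; $(H)$ if $\nabla$ preserves all the structure including the implication; $(P)$ if $\nabla a\le a$; $(F)$ if $a\le\nabla a$; $(wF)$ if $\nabla a=0$ implies $a=0$. $\mathbf{ST}(\mathcal{R})$ is the class of non-commutative spacetimes satisfying all schemes in $\mathcal{R}$, and $i\mathbf{ST}(\mathcal{R})$ the class of spacetimes satisfying them. *)

From Stdlib Require Import List.
Import ListNotations.

Inductive formula : Type :=
| Var  : nat -> formula
| One  : formula
| Top  : formula
| Bot  : formula
| And  : formula -> formula -> formula
| Or   : formula -> formula -> formula
| Tens : formula -> formula -> formula
| Imp  : formula -> formula -> formula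
| Nab  : formula -> formula.

Inductive scheme : Type := sN | sH | sP | sF | swF.

Definition impl_of (p : formula * formula) : formula := Imp (fst p) (snd p).
Definition nimpl_of (p : formula * formula) : formula := Imp (Nab (fst p)) (Nab (snd p)).

(** [derives R st G A] : the calculus STL(R) (st = false) or iSTL(R) (st = true)
    derives the sequent G => A. *)
Inductive derives (R : scheme -> Prop) (st : bool) : list formula -> formula -> Prop :=
| d_id : forall A, derives R st [A] A
| d_one : derives R st [] One
| d_nab1 : derives R st [Nab One] One
| d_top : forall G, derives R st G Top
| d_bot : forall G S A, derives R st (G ++ Bot :: S) A
| d_cut : forall G P S A B,
    derives R st G A -> derives R st (P ++ A :: S) B -> derives R st (P ++ G ++ S) B
| d_andL1 : forall G S A B C,
    derives R st (G ++ A :: S) C -> derives R st (G ++ And A B :: S) C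
| d_andL2 : forall G S A B C,
    derives R st (G ++ B :: S) C -> derives R st (G ++ And A B :: S) C
| d_andR : forall G A B,
    derives R st G A -> derives R st G B -> derives R st G (And A B)
| d_orL : forall G S A B C,
    derives R st (G ++ A :: S) C -> derives R st (G ++ B :: S) C ->
    derives R st (G ++ Or A B :: S) C
| d_orR1 : forall G A B, derives R st G A -> derives R st G (Or A B)
| d_orR2 : forall G A B, derives R st G B -> derives R st G (Or A B)
| d_oneL : forall G S A, derives R st (G ++ S) A -> derives R st (G ++ One :: S) A
| d_tensL : forall G S A B C,
    derives R st (G ++ A :: B :: S) C -> derives R st (G ++ Tens A B :: S) C
| d_tensR : forall G S A B,
    derives R st G A -> derives R st S B -> derives R st (G ++ S) (Tens A B)
| d_nab : forall A B, derives R st [A] B -> derives R st [Nab A] (Nab B)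
| d_oplax : forall A B C,
    derives R st [Nab A; Nab B] C -> derives R st [Nab (Tens A B)] C
| d_impL : forall G P S A B C,
    derives R st G A -> derives R st (P ++ B :: S) C ->
    derives R st (P ++ G ++ Nab (Imp A B) :: S) C
| d_impR : forall G A B,
    derives R st (A :: map Nab G) B -> derives R st G (Imp A B)
| d_N : R sN -> forall G A, derives R st G A -> derives R st (map Nab G) (Nab A)
| d_P : R sP -> forall G A, derives R st G (Nab A) -> derives R st G A
| d_F : R sF -> forall G A, derives R st G A -> derives R st G (Nab A)
| d_wF : R swF -> forall A, derives R st [Nab A] Bot -> derives R st [A] Bot
| d_H : R sH -> forall G (L : list (formula * formula)) C,
    derives R st (G ++ map impl_of L) C ->
    derives R st (map Nab G ++ map nimpl_of L) (Nab C)
| d_weak : st = true -> forall G S A B,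
    derives R st (G ++ S) B -> derives R st (G ++ A :: S) B
| d_contr : st = true -> forall G S A B,
    derives R st (G ++ A :: A :: S) B -> derives R st (G ++ A :: S) B
| d_exch : st = true -> forall G S A B C,
    derives R st (G ++ A :: B :: S) C -> derives R st (G ++ B :: A :: S) C.

Record quantale : Type := {
  qcar :> Type;
  qle : qcar -> qcar -> Prop;
  qle_refl : forall a, qle a a;
  qle_trans : forall a b c, qle a b -> qle b c -> qle a c;
  qle_antisym : forall a b, qle a b -> qle b a -> a = b;
  qmul : qcar -> qcar -> qcar;
  qe : qcar;
  qmul_assoc : forall a b c, qmul a (qmul b c) = qmul (qmul a b) c;
  qmul_e_l : forall a, qmul qe a = a;
  qmul_e_r : forall a, qmul a qe = a;
  qmul_mono : forall a a' b b', qle a a' -> qle b b' -> qle (qmul a b) (qmul a' b');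
  qjoin : (qcar -> Prop) -> qcar;
  qjoin_ub : forall (X : qcar -> Prop) x, X x -> qle x (qjoin X);
  qjoin_least : forall (X : qcar -> Prop) y, (forall x, X x -> qle x y) -> qle (qjoin X) y;
  qmul_join_l : forall (X : qcar -> Prop) a,
      qmul a (qjoin X) = qjoin (fun y => exists x, X x /\ y = qmul a x);
  qmul_join_r : forall (X : qcar -> Prop) a,
      qmul (qjoin X) a = qjoin (fun y => exists x, X x /\ y = qmul x a)
}.

Section Ops.
Variable Q : quantale.
Definition qbot : Q := qjoin Q (fun _ => False).
Definition qtop : Q := qjoin Q (fun _ => True).
Definition qjoin2 (a b : Q) : Q := qjoin Q (fun x => x = a \/ x = b).
Definition qmeet (a b : Q) : Q := qjoin Q (fun x => qle Q x a /\ qle Q x b).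
End Ops.
Arguments qjoin2 {Q} a b.
Arguments qmeet {Q} a b.

Definition is_locale (Q : quantale) : Prop :=
  (forall a b : Q, qmul Q a b = qmeet a b) /\ qe Q = qtop Q.

Record spacetime : Type := {
  sq :> quantale;
  nab : sq -> sq;
  nab_join : forall X : sq -> Prop,
      nab (qjoin sq X) = qjoin sq (fun y => exists x, X x /\ y = nab x);
  nab_e : qle sq (nab (qe sq)) (qe sq);
  nab_mul : forall a b, qle sq (nab (qmul sq a b)) (qmul sq (nab a) (nab b))
}.

(** The implication: a -> c is the largest b with a (x) nab b <= c
    (it exists since nab preserves joins and (x) distributes over joins). *)
Definition simp (S : spacetime) (a c : S) : S :=
  qjoin S (fun b => qle S (qmul S a (nab S b)) c).
Arguments simp {S} a c.

Record valuation (S : spacetime) (V : formula -> S) : Prop := {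
  v_one : V One = qe S;
  v_bot : V Bot = qbot S;
  v_top : V Top = qtop S;
  v_and : forall A B, V (And A B) = qmeet (V A) (V B);
  v_or : forall A B, V (Or A B) = qjoin2 (V A) (V B);
  v_tens : forall A B, V (Tens A B) = qmul S (V A) (V B);
  v_nab : forall A, V (Nab A) = nab S (V A);
  v_imp : forall A B, V (Imp A B) = simp (V A) (V B)
}.

Definition qprod (S : spacetime) (l : list S) : S := fold_right (qmul S) (qe S) l.

Definition sat_seq (S : spacetime) (V : formula -> S) (G : list formula) (A : formula) : Prop :=
  qle S (qprod S (map V G)) (V A).

Definition valid_seq (S : spacetime) (G : list formula) (A : formula) : Prop :=
  forall V, valuation S V -> sat_seq S V G A.

Definition sat_N (S : spacetime) : Prop :=
  nab S (qe S) = qe S /\ forall a b, nab S (qmul S a b) = qmul S (nab S a) (nab S b).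
Definition sat_H (S : spacetime) : Prop :=
  nab S (qe S) = qe S
  /\ (forall a b, nab S (qmul S a b) = qmul S (nab S a) (nab S b))
  /\ nab S (qtop S) = qtop S
  /\ nab S (qbot S) = qbot S
  /\ (forall a b, nab S (qmeet a b) = qmeet (nab S a) (nab S b))
  /\ (forall a b, nab S (qjoin2 a b) = qjoin2 (nab S a) (nab S b))
  /\ (forall a c, nab S (simp a c) = simp (nab S a) (nab S c)).
Definition sat_P (S : spacetime) : Prop := forall a, qle S (nab S a) a.
Definition sat_F (S : spacetime) : Prop := forall a, qle S a (nab S a).
Definition sat_wF (S : spacetime) : Prop := forall a, nab S a = qbot S -> a = qbot S.

Definition sat_scheme (S : spacetime) (r : scheme) : Prop :=
  match r with
  | sN => sat_N S | sH => sat_H S | sP => sat_P S | sF => sat_F S | swF => sat_wF S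
  end.

Definition in_ST (R : scheme -> Prop) (S : spacetime) : Prop :=
  forall r, R r -> sat_scheme S r.
Definition in_iST (R : scheme -> Prop) (S : spacetime) : Prop :=
  is_locale S /\ in_ST R S.

From Stdlib Require Import List.
Import ListNotations.

(* Every logical rule is an order-theoretic fact about quantales:
   the left rules replace a segment of the context by one whose product is
   larger, and the join rules use distributivity of the product over joins.
   The implication rules are the two halves of the adjunction
   [a (x) nab b <= c <-> b <= a -> c], combined with [nab (prod l) <= prod (map nab l)]
   (oplax monoidality); the rule schemes are exactly their frame conditions, and
   the structural rules hold because in a locale the product is a meet. *)

Section Quantale.
Variable Q : quantale.
Notation le := (qle Q).
Notation mul := (qmul Q).

Lemma qbot_le (a : Q) : le (qbot Q) a.
Proof. apply qjoin_least. tauto. Qed.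

Lemma qle_top (a : Q) : le a (qtop Q).
Proof. apply qjoin_ub. exact I. Qed.

Lemma qmeet_lel (a b : Q) : le (qmeet a b) a.
Proof. apply qjoin_least. tauto. Qed.

Lemma qmeet_ler (a b : Q) : le (qmeet a b) b.
Proof. apply qjoin_least. tauto. Qed.

Lemma qmeet_glb (a b c : Q) : le c a -> le c b -> le c (qmeet a b).
Proof. intros. apply qjoin_ub. auto. Qed.

Lemma qjoin2_ubl (a b : Q) : le a (qjoin2 a b).
Proof. apply qjoin_ub. auto. Qed.

Lemma qjoin2_ubr (a b : Q) : le b (qjoin2 a b).
Proof. apply qjoin_ub. auto. Qed.

Lemma qjoin2_idr (a b : Q) : le a b -> qjoin2 a b = b.
Proof.
  intro Hab. apply qle_antisym.
  - apply qjoin_least. intros x [-> | ->]; [exact Hab | apply qle_refl].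
  - apply qjoin2_ubr.
Qed.

Lemma qmul_join_mid_least (g s d : Q) (X : Q -> Prop) :
  (forall x, X x -> le (mul g (mul x s)) d) -> le (mul g (mul (qjoin Q X) s)) d.
Proof.
  intro HX. rewrite qmul_join_r, qmul_join_l. apply qjoin_least.
  intros y [z [[x [Hx ->]] ->]]. auto.
Qed.

Section Locale.
Hypothesis HL : is_locale Q.

Lemma locale_mul_ler (a b : Q) : le (mul a b) b.
Proof. destruct HL as [Hmeet _]. rewrite Hmeet. apply qmeet_ler. Qed.

Lemma locale_mulxx (a : Q) : mul a a = a.
Proof.
  destruct HL as [Hmeet _]. rewrite Hmeet. apply qle_antisym.
  - apply qmeet_lel.
  - apply qmeet_glb; apply qle_refl.
Qed.

Lemma locale_mulC (a b : Q) : mul a b = mul b a.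
Proof.
  destruct HL as [Hmeet _]. rewrite !Hmeet.
  apply qle_antisym; apply qmeet_glb; (apply qmeet_lel || apply qmeet_ler).
Qed.
End Locale.
End Quantale.

Section Spacetime.
Variable S : spacetime.
Notation le := (qle S).
Notation mul := (qmul S).

Lemma nab_mono (a b : S) : le a b -> le (nab S a) (nab S b).
Proof.
  intro Hab. rewrite <- (qjoin2_idr _ _ _ Hab). unfold qjoin2. rewrite nab_join.
  apply qjoin_ub. exists a. auto.
Qed.

Lemma qprod_cat (l1 l2 : list S) : qprod S (l1 ++ l2) = mul (qprod S l1) (qprod S l2).
Proof.
  induction l1 as [|a l IH]; simpl.
  - now rewrite qmul_e_l.
  - unfold qprod in *. now rewrite IH, qmul_assoc.
Qed.

Lemma nab_qprod_le (l : list S) : le (nab S (qprod S l)) (qprod S (map (nab S) l)).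
Proof.
  induction l as [|a l IH]; simpl.
  - apply nab_e.
  - eapply qle_trans; [apply nab_mul|]. apply qmul_mono; [apply qle_refl | exact IH].
Qed.

Lemma nab_qprod (l : list S) : sat_N S -> nab S (qprod S l) = qprod S (map (nab S) l).
Proof.
  intros [He Hmul]. induction l as [|a l IH]; simpl.
  - exact He.
  - unfold qprod in *. now rewrite Hmul, IH.
Qed.

Lemma simp_cancel (a c : S) : le (mul a (nab S (simp a c))) c.
Proof.
  unfold simp. rewrite nab_join, qmul_join_l. apply qjoin_least.
  intros y [z [[x [Hx ->]] ->]]. exact Hx.
Qed.

Lemma simp_greatest (a b c : S) : le (mul a (nab S b)) c -> le b (simp a c).
Proof. intro H. apply qjoin_ub. exact H. Qed.

Lemma sat_H_N : sat_H S -> sat_N S.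
Proof. intros [He [Hmul _]]. split; assumption. Qed.

Lemma sat_wF_le_bot (a : S) : sat_wF S -> le (nab S a) (qbot S) -> le a (qbot S).
Proof.
  intros HwF Ha. rewrite (HwF a); [apply qle_refl|].
  apply qle_antisym; [exact Ha | apply qbot_le].
Qed.
End Spacetime.

Section Soundness.
Variables (R : scheme -> Prop) (st : bool) (S : spacetime) (V : formula -> S).
Hypothesis HR : in_ST R S.
Hypothesis HL : st = true -> is_locale S.
Hypothesis HV : valuation S V.
Notation le := (qle S).
Notation mul := (qmul S).

Lemma map_V_Nab (G : list formula) : map V (map Nab G) = map (nab S) (map V G).
Proof. rewrite !map_map. apply map_ext. intro. apply (v_nab _ _ HV). Qed.

Lemma qprod_map_mid (G D Σ : list formula) :
  qprod S (map V (G ++ D ++ Σ))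
  = mul (qprod S (map V G)) (mul (qprod S (map V D)) (qprod S (map V Σ))).
Proof. now rewrite !map_app, !qprod_cat. Qed.

Lemma qprod_map_ctx (G Σ : list formula) (X : formula) :
  qprod S (map V (G ++ X :: Σ)) = mul (qprod S (map V G)) (mul (V X) (qprod S (map V Σ))).
Proof. now rewrite map_app, qprod_cat. Qed.

Lemma sat_seq_replace (G D D' Σ : list formula) (C : formula) :
  le (qprod S (map V D)) (qprod S (map V D')) ->
  sat_seq S V (G ++ D' ++ Σ) C -> sat_seq S V (G ++ D ++ Σ) C.
Proof.
  unfold sat_seq. rewrite !qprod_map_mid. intros HD HC.
  eapply qle_trans; [|exact HC].
  apply qmul_mono; [apply qle_refl|]. apply qmul_mono; [exact HD | apply qle_refl].
Qed.

Lemma sat_seq_join_mid (G Σ : list formula) (X : formula) (C : formula) (P : S -> Prop) :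
  V X = qjoin S P ->
  (forall x, P x -> le (mul (qprod S (map V G)) (mul x (qprod S (map V Σ)))) (V C)) ->
  sat_seq S V (G ++ X :: Σ) C.
Proof.
  unfold sat_seq. intros HX HP. rewrite qprod_map_ctx, HX.
  apply qmul_join_mid_least. exact HP.
Qed.

Lemma map_V_nimpl (L : list (formula * formula)) :
  sat_H S -> map V (map nimpl_of L) = map (nab S) (map V (map impl_of L)).
Proof.
  intros [_ [_ [_ [_ [_ [_ Hsimp]]]]]].
  rewrite !map_map. apply map_ext. intros [a b]. unfold nimpl_of, impl_of. simpl.
  now rewrite !(v_imp _ _ HV), !(v_nab _ _ HV), Hsimp.
Qed.

Lemma sat_seq_impL (G P Σ : list formula) (A B C : formula) :
  sat_seq S V G A -> sat_seq S V (P ++ B :: Σ) C ->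
  sat_seq S V (P ++ G ++ Nab (Imp A B) :: Σ) C.
Proof.
  intros HA HB. change (G ++ Nab (Imp A B) :: Σ) with (G ++ [Nab (Imp A B)] ++ Σ).
  rewrite (app_assoc G). apply (sat_seq_replace _ (G ++ [Nab (Imp A B)]) [B]); [|exact HB].
  rewrite map_app, qprod_cat. simpl. rewrite (v_nab _ _ HV), (v_imp _ _ HV), !qmul_e_r.
  eapply qle_trans; [apply qmul_mono; [exact HA | apply qle_refl] | apply simp_cancel].
Qed.

Lemma derives_sat (G : list formula) (A : formula) : derives R st G A -> sat_seq S V G A.
Proof.
  unfold sat_seq.
  induction 1; simpl in *; rewrite ?qmul_e_r in *.
  - apply qle_refl.
  - rewrite (v_one _ _ HV). apply qle_refl.
  - rewrite (v_nab _ _ HV), (v_one _ _ HV). apply nab_e.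
  - rewrite (v_top _ _ HV). apply qle_top.
  - apply (sat_seq_join_mid _ _ _ _ _ (v_bot _ _ HV)). tauto.
  - apply (sat_seq_replace P G [A]); [|exact IHderives2].
    simpl. now rewrite qmul_e_r.
  - apply (sat_seq_replace _ [And A B] [A]); [|exact IHderives].
    simpl. rewrite (v_and _ _ HV), !qmul_e_r. apply qmeet_lel.
  - apply (sat_seq_replace _ [And A B] [B]); [|exact IHderives].
    simpl. rewrite (v_and _ _ HV), !qmul_e_r. apply qmeet_ler.
  - rewrite (v_and _ _ HV). apply qmeet_glb; assumption.
  - apply (sat_seq_join_mid _ _ _ _ _ (v_or _ _ HV A B)).
    rewrite !qprod_map_ctx in *. intros x [-> | ->]; assumption.
  - rewrite (v_or _ _ HV). eapply qle_trans; [exact IHderives | apply qjoin2_ubl].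
  - rewrite (v_or _ _ HV). eapply qle_trans; [exact IHderives | apply qjoin2_ubr].
  - apply (sat_seq_replace _ [One] []); [|exact IHderives].
    simpl. rewrite (v_one _ _ HV), qmul_e_r. apply qle_refl.
  - apply (sat_seq_replace _ [Tens A B] [A; B]); [|exact IHderives].
    simpl. rewrite (v_tens _ _ HV), !qmul_e_r. apply qle_refl.
  - rewrite map_app, qprod_cat, (v_tens _ _ HV). apply qmul_mono; assumption.
  - rewrite !(v_nab _ _ HV). apply nab_mono. exact IHderives.
  - rewrite !(v_nab _ _ HV), (v_tens _ _ HV) in *.
    eapply qle_trans; [apply nab_mul | exact IHderives].
  - apply sat_seq_impL; assumption.
  - rewrite (v_imp _ _ HV). apply simp_greatest.
    eapply qle_trans; [|exact IHderives]. apply qmul_mono; [apply qle_refl|].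
    rewrite map_V_Nab. apply nab_qprod_le.
  - rewrite map_V_Nab, (v_nab _ _ HV), <- nab_qprod by exact (HR sN ltac:(assumption)).
    apply nab_mono. exact IHderives.
  - eapply qle_trans; [exact IHderives|]. rewrite (v_nab _ _ HV). exact (HR sP ltac:(assumption) _).
  - eapply qle_trans; [exact IHderives|]. rewrite (v_nab _ _ HV). exact (HR sF ltac:(assumption) _).
  - rewrite (v_nab _ _ HV), (v_bot _ _ HV) in *.
    apply sat_wF_le_bot; [exact (HR swF ltac:(assumption)) | exact IHderives].
  - pose proof (HR sH ltac:(assumption)) as HH.
    rewrite map_app, map_V_Nab, map_V_nimpl, <- map_app, <- nab_qprod, <- map_app, (v_nab _ _ HV)
      by (exact HH || exact (sat_H_N _ HH)).
    apply nab_mono. exact IHderives.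
  - apply (sat_seq_replace _ [A] []); [|exact IHderives].
    simpl. apply locale_mul_ler. auto.
  - apply (sat_seq_replace _ [A] [A; A]); [|exact IHderives].
    simpl. rewrite qmul_e_r, locale_mulxx by auto. apply qle_refl.
  - apply (sat_seq_replace _ [B; A] [A; B]); [|exact IHderives].
    simpl. rewrite !qmul_e_r, locale_mulC by auto. apply qle_refl.
Qed.
End Soundness.

Theorem theorem7p10 (R : scheme -> Prop) :
  (forall G A, derives R false G A -> forall S : spacetime, in_ST R S -> valid_seq S G A)
  /\ (forall G A, derives R true G A -> forall S : spacetime, in_iST R S -> valid_seq S G A).
Proof.
  split.
  - intros G A D S HR V HV. apply (derives_sat R false); [assumption | discriminate | assumption | exact D].
  - intros G A D S [HL HR] V HV. apply (derives_sat R true); auto.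
Qed.
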